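(* Under the standing assumptions, for any fixed $\lambda>0$, with $\eta_1=\frac1d+\frac{\lambda}{n^{1-(k-1)\alpha}\ln d}$, $$\sum_{0\le S\le n\eta_1}\Phi(S)\le \exp\left\{\frac{k\lambda p r}{1-p}\right\}+o(1)\quad (n\to\infty),$$ the sum being over integers $S$.
   Context: Parameters: integer $k\ge2$, constants $\alpha>0$, $r>0$, $0<p<1$; $d=n^{\alpha}$ (treated as an integer), $m=n\ln d$, $\tau=\frac1{1-p}$, $r_{cr}=\frac1{\ln\tau}$. Standing assumptions: $(2k-1)\alpha>1$, $k\alpha\le1$, $k\ge\frac{\tau\ln\tau}{\tau-1}$, and $r<r_{cr}$. Notation: $f(s)=1+\frac{p}{1-p}\cdot\frac{s^k-d^{-k}}{1-d^{-k}}$ for $s\in[0,1]$; $B(S)=\binom{n}{S}\left(\frac1d\right)^{S}\left(1-\frac1d\right)^{n-S}$; $W(S)=f(S/n)^{rm}$; $\Phi(S)=B(S)W(S)$ for $S=0,1,\dots,n$. Limits are as $n\to\infty$ with all constants fixed. *)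

From Stdlib Require Import Reals.
Open Scope R_scope.

Definition dd (alpha : R) (n : nat) : R := Rpower (INR n) alpha.
Definition mm (alpha : R) (n : nat) : R := INR n * ln (dd alpha n).
Definition tau (p : R) : R := 1 / (1 - p).
Definition r_cr (p : R) : R := 1 / ln (tau p).

Definition ff (k : nat) (p d s : R) : R :=
  1 + p / (1 - p) * ((s ^ k - / d ^ k) / (1 - / d ^ k)).

Definition BB (alpha : R) (n S : nat) : R :=
  Binomial.C n S * (/ dd alpha n) ^ S * (1 - / dd alpha n) ^ (n - S).

Definition WW (k : nat) (alpha r p : R) (n S : nat) : R :=
  Rpower (ff k p (dd alpha n) (INR S / INR n)) (r * mm alpha n).

Definition Phi (k : nat) (alpha r p : R) (n S : nat) : R :=
  BB alpha n S * WW k alpha r p n S.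

Definition eta1 (k : nat) (alpha lambda : R) (n : nat) : R :=
  / dd alpha n
  + lambda / (Rpower (INR n) (1 - (INR k - 1) * alpha) * ln (dd alpha n)).

Definition sum_Phi (k : nat) (alpha r p lambda : R) (n : nat) : R :=
  sum_f_R0 (fun S => if Rle_dec (INR S) (INR n * eta1 k alpha lambda n)
                     then Phi k alpha r p n S else 0) n.

From Stdlib Require Import Reals Lra Lia Psatz.
Open Scope R_scope.

(* 1. W is nondecreasing in S and the B(S) are binomial weights summing to 1,
      so the truncated sum is at most W(n eta_1) = f(eta_1)^(r m).
   2. Since ln u <= u - 1, f(eta_1)^(r m) <= exp(r m (f(eta_1) - 1)), and
      r m (f(eta_1) - 1) = r p/(1-p) * m (eta_1^k - d^-k) / (1 - d^-k).
   3. Writing eta_1 = 1/d + b, the increment bound (a+b)^k - a^k <= k b (a+b)^(k-1)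
      together with n = n^(1-(k-1)alpha) d^(k-1) and d <= n^(1-(k-1)alpha)
      (i.e. k alpha <= 1) gives  m (eta_1^k - d^-k) <= k lambda (1 + lambda/ln d)^(k-1).
      Hence, for every n with ln d > 0, the sum is at most
      exp(A (1 + lambda/ln d)^(k-1) / (1 - d^-k)),  A = k lambda p r/(1-p).
   4. The correction factor is at most exp(((k-1) lambda + 2)/ln d), and ln d -> oo,
      so the exponent eventually drops below ln(exp A + eps). *)

Lemma exp_le_compat (x y : R) : x <= y -> exp x <= exp y.
Proof. intros [Hlt|Heq]; [left; now apply exp_increasing | now rewrite Heq; right]. Qed.

Lemma exp_pow (z : R) (j : nat) : exp z ^ j = exp (INR j * z).
Proof. rewrite <- Rpower_pow by apply exp_pos. unfold Rpower. now rewrite ln_exp. Qed.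

Lemma ln_le_pred (v : R) : 0 < v -> ln v <= v - 1.
Proof. intros Hv. pose proof (exp_ineq1_le (ln v)) as H. rewrite exp_ln in H; lra. Qed.

Lemma Rpower_le_exp_pred (u c : R) : 0 < u -> 0 <= c -> Rpower u c <= exp (c * (u - 1)).
Proof.
  intros Hu Hc. unfold Rpower. apply exp_le_compat, Rmult_le_compat_l; [exact Hc|].
  now apply ln_le_pred.
Qed.

(* Monotonicity of u |-> u^c in the base, valid even for u <= 0 (where
   Rpower u c = 1) as long as the larger base is at least 1.  Needed because
   f(S/n) may be nonpositive for small S. *)
Lemma Rpower_le_compat_base (u v c : R) :
  0 <= c -> u <= v -> 1 <= v -> Rpower u c <= Rpower v c.
Proof.
  intros Hc Huv Hv. destruct (Rlt_dec 0 u) as [Hu|Hu].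
  - apply Rle_Rpower_l; lra.
  - assert (Hln : ln u = 0) by (unfold ln; destruct (Rlt_dec 0 u); [contradiction|reflexivity]).
    unfold Rpower. rewrite Hln, Rmult_0_r. apply exp_le_compat.
    apply Rmult_le_pos; [exact Hc|].
    destruct Hv as [Hv|Hv]; [left; rewrite <- ln_1; apply ln_increasing; lra|].
    rewrite <- Hv, ln_1. lra.
Qed.

Lemma pow_increment_le (j : nat) (a b : R) :
  0 <= a -> 0 <= b -> (a + b) ^ S j - a ^ S j <= INR (S j) * b * (a + b) ^ j.
Proof.
  intros Ha Hb. induction j as [|j IH].
  - simpl. lra.
  - assert (Hmon : a ^ S j <= (a + b) ^ S j) by (apply pow_incr; lra).
    assert (Hpos : 0 <= (a + b) ^ j) by (apply pow_le; lra).
    replace ((a + b) ^ S (S j) - a ^ S (S j))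
      with ((a + b) * ((a + b) ^ S j - a ^ S j) + b * a ^ S j) by (simpl; ring).
    rewrite S_INR. simpl in *. nra.
Qed.

Lemma binomial_C_nonneg (n S : nat) : 0 <= Binomial.C n S.
Proof.
  unfold Binomial.C. apply Rmult_le_pos; [apply pos_INR|].
  left. apply Rinv_0_lt_compat, Rmult_lt_0_compat; apply INR_fact_lt_0.
Qed.

Lemma binomial_average_le (n : nat) (q M : R) (w : nat -> R) :
  0 <= q <= 1 -> (forall S, (S <= n)%nat -> w S <= M) ->
  sum_f_R0 (fun S => Binomial.C n S * q ^ S * (1 - q) ^ (n - S) * w S) n <= M.
Proof.
  intros Hq Hw.
  apply Rle_trans with (sum_f_R0 (fun S => Binomial.C n S * q ^ S * (1 - q) ^ (n - S) * M) n).
  - apply sum_Rle. intros S HS. apply Rmult_le_compat_l; [|now apply Hw].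
    apply Rmult_le_pos; [apply Rmult_le_pos; [apply binomial_C_nonneg|]|]; apply pow_le; lra.
  - rewrite <- scal_sum, <- binomial. replace (q + (1 - q)) with 1 by ring.
    rewrite pow1. lra.
Qed.

Lemma ff_le_compat (k : nat) (p d s1 s2 : R) :
  0 < p < 1 -> / d ^ k < 1 -> 0 <= s1 <= s2 -> ff k p d s1 <= ff k p d s2.
Proof.
  intros Hp Hd Hs. unfold ff, Rdiv. apply Rplus_le_compat_l, Rmult_le_compat_l.
  - apply Rmult_le_pos; [lra|]. left; apply Rinv_0_lt_compat; lra.
  - apply Rmult_le_compat_r; [left; apply Rinv_0_lt_compat; lra|].
    apply Rplus_le_compat_r, pow_incr. lra.
Qed.

Lemma ff_at_inv (k : nat) (p d : R) : d <> 0 -> ff k p d (/ d) = 1.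
Proof. intros Hd. unfold ff. rewrite pow_inv. unfold Rdiv. ring. Qed.

Lemma ln_dd (alpha : R) (n : nat) : ln (dd alpha n) = alpha * ln (INR n).
Proof. apply ln_Rpower. Qed.

Lemma dd_pos (alpha : R) (n : nat) : 0 < dd alpha n.
Proof. apply exp_pos. Qed.

Lemma one_le_n_of_ln_dd_pos (alpha : R) (n : nat) : 0 < ln (dd alpha n) -> 1 <= INR n.
Proof.
  rewrite ln_dd. destruct n as [|n]; [|intros _; apply (le_INR 1); lia].
  simpl. unfold ln. intros H. destruct (Rlt_dec 0 0); lra.
Qed.

Lemma one_lt_dd (alpha : R) (n : nat) : 0 < ln (dd alpha n) -> 1 < dd alpha n.
Proof. intros H. apply ln_lt_inv; [lra|apply dd_pos|]. now rewrite ln_1. Qed.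

Lemma dd_le_Rpower (j : nat) (alpha : R) (n : nat) :
  INR (S j) * alpha <= 1 -> 1 <= INR n ->
  dd alpha n <= Rpower (INR n) (1 - (INR (S j) - 1) * alpha).
Proof. intros Hka Hn. apply Rle_Rpower; [exact Hn|]. lra. Qed.

Lemma Rpower_mul_dd_pow (j : nat) (alpha : R) (n : nat) :
  0 < INR n ->
  Rpower (INR n) (1 - (INR (S j) - 1) * alpha) * dd alpha n ^ j = INR n.
Proof.
  intros Hn. unfold dd. rewrite <- Rpower_pow by apply exp_pos.
  rewrite Rpower_mult, <- Rpower_plus, S_INR.
  replace (1 - (INR j + 1 - 1) * alpha + alpha * INR j) with 1 by ring.
  now apply Rpower_1.
Qed.

Lemma eta_increment_bound (j : nat) (x l d P lambda : R) :
  0 < d -> 0 < l -> 0 < lambda -> d <= P -> x = P * d ^ j ->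
  x * l * ((/ d + lambda / (P * l)) ^ S j - (/ d) ^ S j)
    <= INR (S j) * lambda * (1 + lambda / l) ^ j.
Proof.
  intros Hd Hl Hlam HdP Hx.
  set (b := lambda / (P * l)).
  assert (HP : 0 < P) by lra.
  assert (Hb : 0 <= b) by (unfold b; apply Rlt_le, Rdiv_lt_0_compat; nra).
  assert (Hdj : 0 < d ^ j) by (apply pow_lt; lra).
  assert (Hbd : b * d <= lambda / l).
  { unfold b. apply (Rmult_le_reg_r (P * l)); [nra|].
    field_simplify; [nra|lra|split; lra]. }
  assert (Hsplit : / d + b = / d * (1 + b * d)) by (field; lra).
  apply Rle_trans with (x * l * (INR (S j) * b * (/ d + b) ^ j)).
  { apply Rmult_le_compat_l; [rewrite Hx; apply Rmult_le_pos; [apply Rmult_le_pos|]; lra|].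
    apply pow_increment_le; [left; apply Rinv_0_lt_compat|]; lra. }
  rewrite Hsplit, Rpow_mult_distr, pow_inv, Hx.
  replace (P * d ^ j * l * (INR (S j) * b * (/ d ^ j * (1 + b * d) ^ j)))
    with (INR (S j) * lambda * (1 + b * d) ^ j) by (unfold b; field; lra).
  apply Rmult_le_compat_l; [rewrite S_INR; pose proof (pos_INR j); nra|].
  apply pow_incr. nra.
Qed.

Lemma sum_Phi_le_W_eta (k : nat) (alpha r p lambda : R) (n : nat) :
  (1 <= k)%nat -> 0 < p < 1 -> 0 <= r -> 0 < ln (dd alpha n) ->
  / dd alpha n <= eta1 k alpha lambda n ->
  sum_Phi k alpha r p lambda n
    <= Rpower (ff k p (dd alpha n) (eta1 k alpha lambda n)) (r * mm alpha n).
Proof.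
  intros Hk Hp Hr Hl Heta.
  pose proof (one_lt_dd alpha n Hl) as Hd. pose proof (one_le_n_of_ln_dd_pos alpha n Hl) as Hn.
  set (d := dd alpha n) in *. set (eta := eta1 k alpha lambda n) in *.
  assert (Hdk : / d ^ k < 1).
  { assert (1 < d ^ k) by (apply Rlt_pow_R1; [lra|lia]).
    rewrite <- Rinv_1. apply Rinv_lt_contravar; lra. }
  assert (Hinv : 0 < / d < 1).
  { split; [apply Rinv_0_lt_compat; lra|]. rewrite <- Rinv_1. apply Rinv_lt_contravar; lra. }
  assert (Hm : 0 <= r * mm alpha n)
    by (unfold mm; fold d; apply Rmult_le_pos; [|apply Rmult_le_pos]; lra).
  assert (Hf : 1 <= ff k p d eta).
  { rewrite <- (ff_at_inv k p d) at 1 by lra. apply ff_le_compat; lra. }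
  unfold sum_Phi; fold eta.
  apply Rle_trans with (sum_f_R0 (fun S => Binomial.C n S * (/ d) ^ S * (1 - / d) ^ (n - S)
     * (if Rle_dec (INR S) (INR n * eta) then WW k alpha r p n S else 0)) n).
  { right. apply sum_eq. intros S _. unfold Phi, BB. fold d. destruct Rle_dec; ring. }
  apply binomial_average_le; [lra|]. intros S _. destruct Rle_dec as [HS|_].
  - unfold WW. fold d. apply Rpower_le_compat_base; [exact Hm| |exact Hf].
    apply ff_le_compat; [exact Hp|exact Hdk|]. split.
    + unfold Rdiv. apply Rmult_le_pos; [apply pos_INR|left; apply Rinv_0_lt_compat; lra].
    + unfold Rdiv. rewrite Rmult_comm. apply (Rmult_le_reg_l (INR n)); [lra|].
      rewrite <- Rmult_assoc, Rinv_r, Rmult_1_l by lra. exact HS.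
  - unfold Rpower. left. apply exp_pos.
Qed.

Lemma sum_Phi_le_exp (j : nat) (alpha r p lambda : R) (n : nat) :
  0 < r -> 0 < p < 1 -> 0 < lambda -> INR (S j) * alpha <= 1 -> 0 < ln (dd alpha n) ->
  sum_Phi (S j) alpha r p lambda n
    <= exp (INR (S j) * lambda * p * r / (1 - p)
            * ((1 + lambda / ln (dd alpha n)) ^ j / (1 - / dd alpha n ^ S j))).
Proof.
  intros Hr Hp Hlam Hka Hl.
  pose proof (one_lt_dd alpha n Hl) as Hd. pose proof (one_le_n_of_ln_dd_pos alpha n Hl) as Hn.
  pose proof (dd_le_Rpower j alpha n Hka Hn) as HdP.
  pose proof (Rpower_mul_dd_pow j alpha n ltac:(lra)) as Hx.
  set (d := dd alpha n) in *. set (l := ln d) in *.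
  set (P := Rpower (INR n) (1 - (INR (S j) - 1) * alpha)) in *.
  set (b := lambda / (P * l)).
  assert (Heta : eta1 (S j) alpha lambda n = / d + b) by reflexivity.
  assert (Hb : 0 <= b) by (unfold b; apply Rlt_le, Rdiv_lt_0_compat; nra).
  assert (Hdk : 1 < d ^ S j) by (apply Rlt_pow_R1; [lra|lia]).
  assert (He : 0 < / d ^ S j < 1).
  { split; [apply Rinv_0_lt_compat; lra|]. rewrite <- Rinv_1. apply Rinv_lt_contravar; lra. }
  assert (Hinv : 0 < / d) by (apply Rinv_0_lt_compat; lra).
  assert (Hf : 1 <= ff (S j) p d (eta1 (S j) alpha lambda n)).
  { rewrite <- (ff_at_inv (S j) p d) at 1 by lra. apply ff_le_compat; lra. }
  apply Rle_trans with (Rpower (ff (S j) p d (eta1 (S j) alpha lambda n)) (r * mm alpha n)).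
  { apply sum_Phi_le_W_eta; fold d l; [lia|lra|lra|lra|rewrite Heta; lra]. }
  assert (Hm : 0 <= r * mm alpha n).
  { unfold mm; fold d l. apply Rmult_le_pos; [|apply Rmult_le_pos]; lra. }
  eapply Rle_trans; [apply Rpower_le_exp_pred; lra|]. apply exp_le_compat.
  assert (Hexp : r * mm alpha n * (ff (S j) p d (eta1 (S j) alpha lambda n) - 1)
    = r * p / (1 - p) / (1 - / d ^ S j) * (INR n * l * ((/ d + b) ^ S j - (/ d) ^ S j))).
  { rewrite Heta. unfold mm, ff. fold d l. rewrite (pow_inv d (S j)). field. repeat split; lra. }
  rewrite Hexp.
  apply Rle_trans
    with (r * p / (1 - p) / (1 - / d ^ S j) * (INR (S j) * lambda * (1 + lambda / l) ^ j)).
  - apply Rmult_le_compat_l.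
    + unfold Rdiv. apply Rmult_le_pos; [apply Rmult_le_pos; [nra|]|];
        left; apply Rinv_0_lt_compat; lra.
    + apply eta_increment_bound; lra.
  - right. field. lra.
Qed.

Lemma ln_dd_unbounded (alpha : R) : 0 < alpha ->
  forall M : R, exists N : nat, forall n : nat, (N <= n)%nat -> M <= ln (dd alpha n).
Proof.
  intros Ha M. destruct (INR_unbounded (exp (M / alpha))) as [N HN].
  exists N. intros n Hn. rewrite ln_dd.
  assert (Hnx : exp (M / alpha) < INR n) by (apply le_INR in Hn; lra).
  assert (Hln : M / alpha < ln (INR n)).
  { rewrite <- (ln_exp (M / alpha)) at 1. apply ln_increasing; [apply exp_pos|exact Hnx]. }
  replace M with (alpha * (M / alpha)) at 1 by (field; lra).
  apply Rmult_le_compat_l; lra.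
Qed.

(* Step 4: once ln d >= 2 the correction factor of step 3 is at most
   exp((j lambda + 2)/ln d); uses d^-(j+1) <= 1/d <= 1/ln d <= 1/2. *)
Lemma correction_factor_le (j : nat) (lambda d : R) :
  0 < lambda -> 2 <= ln d ->
  (1 + lambda / ln d) ^ j / (1 - / d ^ S j) <= exp ((INR j * lambda + 2) / ln d).
Proof.
  intros Hlam Hl. set (l := ln d) in *.
  assert (Hd : 1 < d).
  { destruct (Rlt_dec 0 d) as [Hd0|Hd0].
    - apply ln_lt_inv; [lra|exact Hd0|]. rewrite ln_1. fold l. lra.
    - exfalso. unfold l, ln in Hl. destruct (Rlt_dec 0 d); [contradiction|lra]. }
  assert (Hdk : d <= d ^ S j) by (rewrite <- (pow_1 d) at 1; apply Rle_pow; [lra|lia]).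
  assert (Hld : l < d) by (pose proof (ln_le_pred d ltac:(lra)) as H; fold l in H; lra).
  set (e := / d ^ S j).
  assert (He : 0 < e <= / l).
  { split; [apply Rinv_0_lt_compat; lra|]. apply Rinv_le_contravar; lra. }
  assert (Hl2 : / l <= / 2) by (apply Rinv_le_contravar; lra).
  assert (Hlam_l : 0 < lambda / l) by (apply Rdiv_lt_0_compat; lra).
  assert (Hpow : (1 + lambda / l) ^ j <= exp (INR j * (lambda / l))).
  { rewrite <- exp_pow. apply pow_incr. split; [lra|apply exp_ineq1_le]. }
  assert (Hinv : / (1 - e) <= exp (2 / l)).
  { apply Rle_trans with (1 + 2 * / l); [|unfold Rdiv; apply exp_ineq1_le].
    apply (Rmult_le_reg_l (1 - e)); [lra|]. rewrite Rinv_r by lra. nra. }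
  replace ((INR j * lambda + 2) / l) with (INR j * (lambda / l) + 2 / l) by (field; lra).
  rewrite exp_plus. unfold Rdiv at 1.
  apply Rmult_le_compat; [apply pow_le; lra|left; apply Rinv_0_lt_compat; lra|exact Hpow|exact Hinv].
Qed.

(* If l >= c / ln(L/A) then A exp(c/l) <= L: how large ln d must be for the
   final exponent to drop below L = ln(exp A + eps). *)
Lemma scaled_exp_le (A L c l : R) :
  0 < A < L -> 0 < l -> c / ln (L / A) <= l -> A * exp (c / l) <= L.
Proof.
  intros HAL Hl Hcl.
  assert (Hmu : 0 < ln (L / A)).
  { rewrite <- ln_1. apply ln_increasing; [lra|].
    replace (L / A) with (1 + (L - A) / A) by (field; lra).
    pose proof (Rdiv_lt_0_compat (L - A) A ltac:(lra) ltac:(lra)). lra. }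
  assert (Hexp : exp (c / l) <= L / A).
  { rewrite <- (exp_ln (L / A)) by (apply Rdiv_lt_0_compat; lra). apply exp_le_compat.
    replace (c / l) with (c / ln (L / A) * (ln (L / A) / l)) by (field; lra).
    apply Rle_trans with (l * (ln (L / A) / l)).
    - apply Rmult_le_compat_r; [left; apply Rdiv_lt_0_compat|]; lra.
    - right. field. lra. }
  apply (Rmult_le_compat_l A) in Hexp; [|lra].
  replace (A * (L / A)) with L in Hexp by (field; lra). exact Hexp.
Qed.

Theorem lemma4p3 (k : nat) (alpha r p lambda : R) :
  (2 <= k)%nat -> 0 < alpha -> 0 < r -> 0 < p < 1 ->
  (2 * INR k - 1) * alpha > 1 ->
  INR k * alpha <= 1 ->
  INR k >= tau p * ln (tau p) / (tau p - 1) ->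
  r < r_cr p ->
  0 < lambda ->
  forall eps : R, 0 < eps ->
  exists N : nat, forall n : nat, (N <= n)%nat ->
    sum_Phi k alpha r p lambda n
      <= exp (INR k * lambda * p * r / (1 - p)) + eps.
Proof.
  intros Hk Ha Hr Hp _ Hka _ _ Hlam eps Heps.
  destruct k as [|j]; [lia|].
  set (A := INR (S j) * lambda * p * r / (1 - p)).
  assert (HA : 0 < A).
  { unfold A. apply Rdiv_lt_0_compat; [|lra].
    pose proof (lt_0_INR (S j) ltac:(lia)). repeat apply Rmult_lt_0_compat; lra. }
  set (L := ln (exp A + eps)).
  assert (HL : A < L).
  { unfold L. rewrite <- (ln_exp A) at 1. apply ln_increasing; [apply exp_pos|lra]. }
  set (c := INR j * lambda + 2).
  destruct (ln_dd_unbounded alpha Ha (Rmax 2 (c / ln (L / A)))) as [N HN].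
  exists N. intros n Hn. specialize (HN n Hn).
  pose proof (Rmax_l 2 (c / ln (L / A))) as Hl2.
  pose proof (Rmax_r 2 (c / ln (L / A))) as Hlc.
  eapply Rle_trans; [apply sum_Phi_le_exp; lra|]. fold A.
  rewrite <- (exp_ln (exp A + eps)) by (pose proof (exp_pos A); lra). fold L.
  apply exp_le_compat, Rle_trans with (A * exp (c / ln (dd alpha n))).
  - apply Rmult_le_compat_l; [lra|]. apply correction_factor_le; lra.
  - apply scaled_exp_le; lra.
Qed.
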